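(* Let $(M,J,\Theta)$ be a 3-dimensional pseudohermitian manifold with vanishing torsion and constant Webster scalar curvature $W$, and let $\Sigma\subset M$ be a surface. On any open set of nonsingular points of $\Sigma$ where $H_{cr}\neq0$, the function $\mathfrak f$ defined below satisfies $$|H_{cr}|\mathfrak f=e_1(H)H_{cr}+\tfrac32V(H_{cr})+\tfrac12He_1(H_{cr})-\alpha HH_{cr},$$ and the first-variation density $\mathcal E_1$ can be rewritten as $$\mathcal E_1=|H_{cr}|^{-1/2}\Big\{-\tfrac14\operatorname{sign}(H_{cr})\,\mathfrak f\,e_1(H_{cr})+\tfrac12e_1(|H_{cr}|\mathfrak f)+\tfrac32|H_{cr}|\mathfrak f\alpha+H_{cr}\big[\tfrac92V(\alpha)+3HH_{cr}-\tfrac16H^3\big]\Big\}.$$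
   Context: $\xi=\ker\Theta$, $T$ the Reeb field. At nonsingular points of $\Sigma$ ($T\Sigma\neq\xi$), $e_1$ is a unit vector (w.r.t. $\frac12d\Theta(\cdot,J\cdot)$) spanning $T\Sigma\cap\xi$, $e_2=Je_1$, $\alpha$ is the deviation function defined by $V:=T+\alpha e_2\in T\Sigma$, and $H$ is the $p$-mean curvature. Define $H_{cr}:=e_1(\alpha)+\frac12\alpha^2+\frac16H^2+\frac14W$ and $$\mathfrak f:=|H_{cr}|^{-1}\Big\{e_1(H)\big(e_1(\alpha)+\tfrac12\alpha^2+\tfrac13H^2+\tfrac14W\big)+HV(H)+\tfrac32V\big(e_1(\alpha)+\tfrac12\alpha^2\big)-\tfrac72\alpha He_1(\alpha)-\tfrac52\alpha^3H-\tfrac23\alpha H^3-\tfrac54\alpha HW\Big\},$$ $$\mathcal E_1:=\tfrac12e_1(|H_{cr}|^{1/2}\mathfrak f)+\tfrac32|H_{cr}|^{1/2}\alpha\mathfrak f+\tfrac12\operatorname{sign}(H_{cr})|H_{cr}|^{1/2}\{9V(\alpha)+6HH_{cr}-\tfrac13H^3\}.$$ In such a manifold the Codazzi-like equation $e_1e_1(\alpha)=-6\alpha e_1(\alpha)+V(H)-\alpha H^2-4\alpha^3-2W\alpha$ holds. *)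

From HB Require Import structures.
From mathcomp Require Import all_boot all_order all_algebra.
From mathcomp Require Import all_classical all_reals all_analysis.
Set Implicit Arguments. Unset Strict Implicit. Unset Printing Implicit Defensive.
Import Order.TTheory GRing.Theory Num.Theory.
Import numFieldNormedType.Exports.
Local Open Scope ring_scope.
Local Open Scope classical_set_scope.

(* Local model of the nonsingular part of the surface: an open set of a
   coordinate chart 'rV[R]_2.  Functions on the surface are maps 'rV[R]_2 -> R,
   tangent vector fields are maps 'rV[R]_2 -> 'rV[R]_2. *)
Notation pt R := ('rV[R]_2).

CoInductive smooth_on (R : realType) (U : set (pt R)) (f : pt R -> R) : Prop :=
  SmoothOn : (forall p, U p -> differentiable f p) ->
             (forall v : pt R, smooth_on U (fun p => 'D_v f p)) ->
             smooth_on U f.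

Definition smooth_vf (R : realType) (U : set (pt R)) (X : pt R -> pt R) : Prop :=
  forall i : 'I_2, smooth_on U (fun p => X p ord0 i).

Definition vf (R : realType) (X : pt R -> pt R) (f : pt R -> R) : pt R -> R :=
  fun p => 'D_(X p) f p.

Definition Hcr (R : realType) (e1 : pt R -> pt R) (alpha H : pt R -> R) (W : R)
  : pt R -> R :=
  fun p => vf e1 alpha p + alpha p ^+ 2 / 2 + H p ^+ 2 / 6 + W / 4.

Definition frakf (R : realType) (e1 V : pt R -> pt R) (alpha H : pt R -> R) (W : R)
  : pt R -> R :=
  fun p => (`|Hcr e1 alpha H W p|)^-1 *
    ( vf e1 H p * (vf e1 alpha p + alpha p ^+ 2 / 2 + H p ^+ 2 / 3 + W / 4)
    + H p * vf V H p
    + 3 / 2 * vf V (fun q => vf e1 alpha q + alpha q ^+ 2 / 2) p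
    - 7 / 2 * alpha p * H p * vf e1 alpha p
    - 5 / 2 * alpha p ^+ 3 * H p
    - 2 / 3 * alpha p * H p ^+ 3
    - 5 / 4 * alpha p * H p * W ).

Definition E1 (R : realType) (e1 V : pt R -> pt R) (alpha H : pt R -> R) (W : R)
  : pt R -> R :=
  fun p =>
    let hc := Hcr e1 alpha H W in
    let f := frakf e1 V alpha H W in
    1 / 2 * vf e1 (fun q => Num.sqrt `|hc q| * f q) p
    + 3 / 2 * Num.sqrt `|hc p| * alpha p * f p
    + 1 / 2 * Num.sg (hc p) * Num.sqrt `|hc p| *
        (9 * vf V alpha p + 6 * H p * hc p - H p ^+ 3 / 3).

From HB Require Import structures.
From mathcomp Require Import all_boot all_order all_algebra.
From mathcomp Require Import all_classical all_reals all_analysis.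
From mathcomp Require Import ring.
Import Order.TTheory GRing.Theory Num.Theory.
Import numFieldNormedType.Exports.
Local Open Scope ring_scope.
Local Open Scope classical_set_scope.

(* The first identity is a direct expansion: once |H_cr| is cleared from the
   definition of f, the Leibniz rule expresses V(H_cr) and e_1(H_cr) through
   first derivatives of alpha and H, except for the term e_1 e_1(alpha), which
   the Codazzi-like equation eliminates.  For the second, put s = |H_cr|^(1/2).
   Near a point where H_cr <> 0 we have |H_cr| = sign(H_cr) H_cr, hence
   e_1(s) = sign(H_cr) e_1(H_cr) / (2 s); writing s f = (|H_cr| f) / s, the
   quotient rule turns e_1(s f) into the announced expression. *)

Section NearDifferentiable.
Context {R : realType} {V W : normedModType R}.

Lemma differentiable_near0 (h : V -> W) (a : V) :
  (\forall x \near a, h x = 0) -> differentiable h a.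
Proof.
move=> h0; have ha : h a = 0 := nbhs_singleton h0.
have expand : h \o shift a = cst (h a) + \0 +o_ 0 id.
  apply/eqaddoP => _/posnumP[e].
  rewrite (near_shift (0 : V) a) in h0; near=> y.
  rewrite !fctE /= ha addr0 subr0.
  suff -> : h (y + a) = 0 by rewrite normr0 mulr_ge0.
  by near: y; apply: filterS h0 => y /=; rewrite subr0.
have dh0 : 'd h a = \0 :> (V -> W) by apply: diff_unique; first exact: cst_continuous.
by apply/diff_locallyP; rewrite dh0; split; first exact: cst_continuous.
Unshelve. all: by end_near. Qed.

Lemma near_eq_differentiable (f g : V -> W) (a : V) :
  (\forall x \near a, f x = g x) -> differentiable f a -> differentiable g a.
Proof.
move=> fg df; have -> : g = f + (g - f) by apply/funext => x; rewrite addrC subrK.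
apply: differentiableD => //; apply: differentiable_near0.
by apply: filterS fg => x fgx; rewrite !fctE fgx subrr.
Qed.

End NearDifferentiable.

Section SmoothOn.
Context {R : realType}.
Variable U : set (pt R).
Implicit Types f g : pt R -> R.

Lemma smooth_on_differentiable f p : smooth_on U f -> U p -> differentiable f p.
Proof. by case=> + _; apply. Qed.

Lemma smooth_on_derivable f p v : smooth_on U f -> U p -> derivable f p v.
Proof. by move=> sf Up; apply/diff_derivable; apply: smooth_on_differentiable sf Up. Qed.

Hypothesis oU : open U.

(* [smooth_on] is coinductive, so its closure properties are obtained through
   this inductive invariant, which is stable under directional derivatives. *)
Inductive smooth_gen : (pt R -> R) -> Prop :=
| SGsmooth f : smooth_on U f -> smooth_gen f
| SGcst (c : R) : smooth_gen (fun _ => c)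
| SGadd f g : smooth_gen f -> smooth_gen g -> smooth_gen (fun q => f q + g q)
| SGmul f g : smooth_gen f -> smooth_gen g -> smooth_gen (fun q => f q * g q)
| SGeq f g : smooth_gen f -> (forall q, U q -> f q = g q) -> smooth_gen g.
Arguments SGsmooth {f}. Arguments SGadd {f g}. Arguments SGmul {f g}.
Arguments SGeq {f g}.

Lemma near_eq_in_U f g p : (forall q, U q -> f q = g q) -> U p ->
  \forall q \near p, f q = g q.
Proof. by move=> fg Up; apply: filterS fg _; apply: open_nbhs_nbhs; split. Qed.

Lemma smooth_gen_differentiable f p : smooth_gen f -> U p -> differentiable f p.
Proof.
move=> sf; elim: sf p => {f}.
- by move=> f sf p; apply: smooth_on_differentiable.
- by move=> c p _; apply: differentiable_cst.
- by move=> f g _ df _ dg p Up; apply: differentiableD; [apply: df|apply: dg].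
- by move=> f g _ df _ dg p Up; apply: differentiableM; [apply: df|apply: dg].
- move=> f g _ df fg p Up; apply: near_eq_differentiable (df p Up).
  exact: near_eq_in_U.
Qed.

Lemma smooth_gen_derive f v : smooth_gen f -> smooth_gen (fun q => 'D_v f q).
Proof.
have der g p : smooth_gen g -> U p -> derivable g p v.
  by move=> sg Up; apply/diff_derivable; apply: smooth_gen_differentiable sg Up.
move=> sf; elim: sf => {f}.
- by move=> f [_ sDf]; apply: SGsmooth.
- by move=> c; apply: (SGeq (SGcst 0)) => q _; rewrite (derive_cst c).
- move=> f g sf sDf sg sDg; apply: (SGeq (SGadd sDf sDg)) => q Uq.
  by rewrite (deriveD (der _ _ sf Uq) (der _ _ sg Uq)).
- move=> f g sf sDf sg sDg.
  apply: (SGeq (SGadd (SGmul sf sDg) (SGmul sg sDf))) => q Uq.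
  by rewrite (deriveM (der _ _ sf Uq) (der _ _ sg Uq)).
- move=> f g _ sDf fg; apply: (SGeq sDf) => q Uq.
  exact/near_eq_derive/near_eq_in_U.
Qed.

Lemma smooth_gen_smooth f : smooth_gen f -> smooth_on U f.
Proof.
move: f; cofix IH => f sf; constructor => [p Up|v].
- exact: smooth_gen_differentiable.
- by apply: IH; apply: smooth_gen_derive.
Qed.

Lemma smooth_on_eq {f} g : smooth_on U f -> (forall q, U q -> f q = g q) ->
  smooth_on U g.
Proof. by move=> sf fg; apply/smooth_gen_smooth/(SGeq (SGsmooth sf)). Qed.

Lemma smooth_on_cst (c : R) : smooth_on U (fun _ => c).
Proof. exact/smooth_gen_smooth/SGcst. Qed.

Lemma smooth_onD {f g} : smooth_on U f -> smooth_on U g ->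
  smooth_on U (fun q => f q + g q).
Proof. by move=> sf sg; apply/smooth_gen_smooth/SGadd; apply: SGsmooth. Qed.

Lemma smooth_onM {f g} : smooth_on U f -> smooth_on U g ->
  smooth_on U (fun q => f q * g q).
Proof. by move=> sf sg; apply/smooth_gen_smooth/SGmul; apply: SGsmooth. Qed.

Lemma smooth_onN {f} : smooth_on U f -> smooth_on U (fun q => - f q).
Proof.
move=> sf; apply: smooth_on_eq (smooth_onM (smooth_on_cst (-1)) sf) _.
by move=> q _; rewrite mulN1r.
Qed.

Lemma smooth_onX {f} n : smooth_on U f -> smooth_on U (fun q => f q ^+ n).
Proof.
move=> sf; elim: n => [|n IH].
  by apply: smooth_on_eq (smooth_on_cst 1) _ => q _; rewrite expr0.
by apply: smooth_on_eq (smooth_onM sf IH) _ => q _; rewrite exprS.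
Qed.

Lemma smooth_on_vf (X : pt R -> pt R) g : smooth_vf U X -> smooth_on U g ->
  smooth_on U (vf X g).
Proof.
move=> sX sg; pose D i q := X q ord0 i * 'D_(delta_mx ord0 i) g q.
have sD i : smooth_on U (D i).
  by apply: smooth_onM (sX i) _; case: sg => _; apply.
apply: smooth_on_eq (smooth_onD (sD ord0) (sD (lift ord0 ord0))) _ => q Uq.
rewrite /vf /D !(deriveE _ (smooth_on_differentiable _ _ sg Uq)).
by rewrite [in RHS](row_sum_delta (X q)) linear_sum big_ord_recl big_ord1 !linearZ.
Qed.

End SmoothOn.

Section DirectionalDerivatives.
Context {R : realType}.
Implicit Types (X : pt R -> pt R) (f g h : pt R -> R) (p : pt R).

Lemma vfC X (c : R) p : vf X (fun _ => c) p = 0.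
Proof. by rewrite /vf (derive_cst c). Qed.

Lemma vfD X f g p : derivable f p (X p) -> derivable g p (X p) ->
  vf X (fun q => f q + g q) p = vf X f p + vf X g p.
Proof. by move=> df dg; rewrite /vf (deriveD df dg). Qed.

Lemma vfM X f g p : derivable f p (X p) -> derivable g p (X p) ->
  vf X (fun q => f q * g q) p = f p * vf X g p + g p * vf X f p.
Proof. by move=> df dg; rewrite /vf (deriveM df dg). Qed.

Lemma near_normr_sg h p : {for p, continuous h} -> h p != 0 ->
  \forall q \near p, `|h q| = Num.sg (h p) * h q.
Proof.
move=> ch hp0; have : \forall q \near p, 0 < Num.sg (h p) * h q.
  apply: (cvgr_gt (Num.sg (h p) * h p) (cvgM (cvg_cst _) ch)).
  by rewrite -normrEsg normr_gt0.
apply: filterS => q sgh_gt0.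
by rewrite -[RHS]gtr0_norm // normrM normr_sg hp0 mul1r.
Qed.

Section SqrtNorm.
Variables (h : pt R -> R) (p : pt R).
Hypotheses (dh : differentiable h p) (hp0 : h p != 0).

Let normh_sg : \forall q \near p, `|h q| = Num.sg (h p) * h q.
Proof. by apply: near_normr_sg => //; apply: differentiable_continuous. Qed.

Lemma differentiable_sqrt_normr : differentiable (fun q => Num.sqrt `|h q|) p.
Proof.
have dnormh : differentiable (fun q => `|h q|) p.
  apply: near_eq_differentiable (differentiableM (differentiable_cst _ _) dh).
  by apply: filterS normh_sg => q ->.
apply: differentiable_comp dnormh _; apply/derivable1_diffP.
by case: (@is_derive1_sqrt R `|h p|); rewrite ?normr_gt0.
Qed.

(* Differentiate [s * s = |h|], where [|h| = sg (h p) * h] near [p]. *)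
Lemma vf_sqrt_normr X : vf X (fun q => Num.sqrt `|h q|) p =
  Num.sg (h p) * vf X h p / (2 * Num.sqrt `|h p|).
Proof.
set s := fun q => Num.sqrt `|h q|.
have ds : derivable s p (X p) by apply/diff_derivable/differentiable_sqrt_normr.
have sp0 : s p != 0 by rewrite sqrtr_eq0 -ltNge normr_gt0.
have vf_normh : vf X (fun q => `|h q|) p = Num.sg (h p) * vf X h p.
  by rewrite /vf (near_eq_derive _ normh_sg) deriveMl //; apply: diff_derivable.
have : vf X (fun q => s q * s q) p = vf X (fun q => `|h q|) p.
  by congr (vf X _ p); apply/funext => q; rewrite /s -expr2 sqr_sqrtr.
by rewrite vfM // vf_normh -/(s p) => <-; field.
Qed.

Lemma vf_sqrt_normr_mul X f :
  derivable (fun q => `|h q| * f q) p (X p) ->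
  vf X (fun q => Num.sqrt `|h q| * f q) p = (Num.sqrt `|h p|)^-1 *
    (vf X (fun q => `|h q| * f q) p - Num.sg (h p) * f p * vf X h p / 2).
Proof.
set s := fun q => Num.sqrt `|h q|; set F := fun q => `|h q| * f q => dF.
have ds : derivable s p (X p) by apply/diff_derivable/differentiable_sqrt_normr.
have sp0 : s p != 0 by rewrite sqrtr_eq0 -ltNge normr_gt0.
have sE q : `|h q| = s q ^+ 2 by rewrite sqr_sqrtr.
have -> : (fun q => s q * f q) = (fun q => F q * (s q)^-1).
  apply/funext => q; rewrite /F sE.
  by have [->|sq0] := eqVneq (s q) 0; [rewrite expr2 !mul0r|field].
rewrite vfM //; last exact: derivableV.
rewrite /vf deriveV // -!/(vf X _ p) vf_sqrt_normr -/(s p) [F p]/F sE.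
by rewrite -[_ *: _]/(_ * _); field.
Qed.

End SqrtNorm.
End DirectionalDerivatives.

(* [done] must not be run on [smooth_on] goals: it would keep applying the
   constructor of this coinductive predicate. *)
Ltac smooth := repeat first [ assumption | apply: smooth_on_vf | apply: smooth_onD
  | apply: smooth_onM | apply: smooth_onN | apply: smooth_onX | apply: smooth_on_cst ].

Section Proposition5p2.
Variables (R : realType) (U : set (pt R)) (e1 V : pt R -> pt R)
  (alpha H : pt R -> R) (W : R).
Hypotheses (oU : open U) (se1 : smooth_vf U e1) (sV : smooth_vf U V)
  (salpha : smooth_on U alpha) (sH : smooth_on U H)
  (Hcr_neq0 : forall p, U p -> Hcr e1 alpha H W p != 0)
  (codazzi : forall p, U p -> vf e1 (vf e1 alpha) p =
     - 6 * alpha p * vf e1 alpha p + vf V H p - alpha p * H p ^+ 2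
     - 4 * alpha p ^+ 3 - 2 * W * alpha p).

Local Notation hc := (Hcr e1 alpha H W).
Local Notation f := (frakf e1 V alpha H W).

Lemma smooth_Hcr : smooth_on U hc.
Proof. rewrite /Hcr; smooth. Qed.

Lemma normr_Hcr_mul_frakf p : U p -> `|hc p| * f p =
  vf e1 H p * hc p + 3 / 2 * vf V hc p + 1 / 2 * H p * vf e1 hc p
  - alpha p * H p * hc p.
Proof.
move=> Up; rewrite /frakf mulrA mulfV ?normr_eq0 ?Hcr_neq0 // mul1r /Hcr.
rewrite !vfD; try solve [apply: (smooth_on_derivable U); [smooth | assumption]].
rewrite !vfM; try solve [apply: (smooth_on_derivable U); [smooth | assumption]].
by rewrite !vfC codazzi //; field.
Qed.

Lemma smooth_normr_Hcr_mul_frakf : smooth_on U (fun q => `|hc q| * f q).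
Proof.
have shc := smooth_Hcr.
apply: (smooth_on_eq U oU _ _ (fun q Uq => esym (normr_Hcr_mul_frakf q Uq))).
smooth.
Qed.

Lemma E1E p : U p -> E1 e1 V alpha H W p =
  (Num.sqrt `|hc p|)^-1 *
  ( - (1 / 4) * Num.sg (hc p) * f p * vf e1 hc p
    + 1 / 2 * vf e1 (fun q => `|hc q| * f q) p
    + 3 / 2 * `|hc p| * f p * alpha p
    + hc p * (9 / 2 * vf V alpha p + 3 * H p * hc p - H p ^+ 3 / 6) ).
Proof.
move=> Up; rewrite /E1 /= vf_sqrt_normr_mul; last 3 first.
- exact: smooth_on_differentiable smooth_Hcr Up.
- exact: Hcr_neq0.
- exact: smooth_on_derivable smooth_normr_Hcr_mul_frakf Up.
set sg := Num.sg (hc p).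
have hcE : hc p = sg * `|hc p| := numEsg (hc p).
have normE : `|hc p| = Num.sqrt `|hc p| ^+ 2 by rewrite sqr_sqrtr.
have s0 : Num.sqrt `|hc p| != 0 by rewrite sqrtr_eq0 -ltNge normr_gt0 Hcr_neq0.
(* Abstracting [|hc p|] and its root keeps the rewrites below out of them. *)
set a := `|hc p| in hcE normE s0 *; set s := Num.sqrt a in normE s0 *.
by rewrite hcE normE; field.
Qed.

End Proposition5p2.

Theorem proposition5p2 (R : realType) (U : set 'rV[R]_2)
  (e1 V : 'rV[R]_2 -> 'rV[R]_2) (alpha H : 'rV[R]_2 -> R) (W : R) :
  open U ->
  smooth_vf U e1 -> smooth_vf U V ->
  smooth_on U alpha -> smooth_on U H ->
  (forall p, U p -> Hcr e1 alpha H W p != 0) ->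
  (forall p, U p ->
     vf e1 (vf e1 alpha) p =
       - 6 * alpha p * vf e1 alpha p + vf V H p - alpha p * H p ^+ 2
       - 4 * alpha p ^+ 3 - 2 * W * alpha p) ->
  forall p, U p ->
    let hc := Hcr e1 alpha H W in
    let f := frakf e1 V alpha H W in
    `|hc p| * f p =
      vf e1 H p * hc p + 3 / 2 * vf V hc p + 1 / 2 * H p * vf e1 hc p
      - alpha p * H p * hc p
    /\
    E1 e1 V alpha H W p =
      (Num.sqrt `|hc p|)^-1 *
      ( - (1 / 4) * Num.sg (hc p) * f p * vf e1 hc p
        + 1 / 2 * vf e1 (fun q => `|hc q| * f q) p
        + 3 / 2 * `|hc p| * f p * alpha p
        + hc p * (9 / 2 * vf V alpha p + 3 * H p * hc p - H p ^+ 3 / 6) ).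
Proof.
move=> oU se1 sV salpha sH Hcr_neq0 codazzi p Up hc f.
by split; [apply: (@normr_Hcr_mul_frakf _ U) | apply: (@E1E _ U)].
Qed.
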